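(* Let $C>0$ and for each $A>1$ let $\mathcal{D}_A=\{(\mathbf f,\mathbf g,\mathbf F,\mathbf G,\mathbf u,\mathbf v)\in\mathbb{R}^6:\ \mathbf u,\mathbf v>0,\ 1\le\mathbf u\mathbf v\le A,\ \mathbf f^2\le\mathbf F\mathbf v,\ \mathbf g^2\le\mathbf G\mathbf u\}$ and let $\mathcal{B}_A:\mathcal{D}_A\to\mathbb{R}$ be functions such that (i) $0\le\mathcal{B}_A(X)\le CA\mathbf F^{1/2}\mathbf G^{1/2}$ for all $X\in\mathcal{D}_A$, and (ii) for all $X,X_1,X_2\in\mathcal{D}_A$ with $X=(X_1+X_2)/2$, $\mathcal{B}_A(X)\ge\frac12(\mathcal{B}_A(X_1)+\mathcal{B}_A(X_2))+|\mathbf f_1-\mathbf f_2|\cdot|\mathbf g_1-\mathbf g_2|$, where $\mathbf f_i,\mathbf g_i$ are the first two coordinates of $X_i$. Fix $A>1$, $n\ge1$ and a dyadic interval $I_0\subset\mathbb{R}$, and suppose that for every $I\in\operatorname{chld}_k(I_0)$, $0\le k\le n$, a point $X_I=(\mathbf f_I,\mathbf g_I,\mathbf F_I,\mathbf G_I,\mathbf u_I,\mathbf v_I)\in\mathcal{D}_A$ is given such that $X_I=(X_{I_1}+X_{I_2})/2$ whenever $I\in\operatorname{chld}_k(I_0)$, $0\le k<n$, and $I_1,I_2$ are the children of $I$. Then, with $A'=4.5A$, \[ \Bigl(2^{-n}\!\!\sum_{I\in\operatorname{chld}_n(I_0)}|\mathbf f_I-\mathbf f_{I_0}|\Bigr)\Bigl(2^{-n}\!\!\sum_{I\in\operatorname{chld}_n(I_0)}|\mathbf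 g_I-\mathbf g_{I_0}|\Bigr)\le 72\Bigl(\mathcal{B}_{A'}(X_{I_0})-2^{-n}\!\!\sum_{I\in\operatorname{chld}_n(I_0)}\mathcal{B}_{A'}(X_I)\Bigr). \]
   Context: For a dyadic interval $I$, $\operatorname{chld}_0(I)=\{I\}$ and $\operatorname{chld}_k(I)$ is the set of the $2^k$ dyadic subintervals of $I$ of length $2^{-k}|I|$. Note $\mathcal{D}_A\subset\mathcal{D}_{A'}$ for $A\le A'$. *)

From Stdlib Require Import Reals List.
Open Scope R_scope.

Record Pt := mkPt { pf : R; pg : R; pF : R; pG : R; pu : R; pv : R }.

Definition inD (A : R) (X : Pt) : Prop :=
  0 < pu X /\ 0 < pv X /\ 1 <= pu X * pv X /\ pu X * pv X <= A /\
  (pf X) ^ 2 <= pF X * pv X /\ (pg X) ^ 2 <= pG X * pu X.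

Definition is_mid (X X1 X2 : Pt) : Prop :=
  pf X = (pf X1 + pf X2) / 2 /\ pg X = (pg X1 + pg X2) / 2 /\
  pF X = (pF X1 + pF X2) / 2 /\ pG X = (pG X1 + pG X2) / 2 /\
  pu X = (pu X1 + pu X2) / 2 /\ pv X = (pv X1 + pv X2) / 2.

Definition rsum (m : nat) (a : nat -> R) : R :=
  fold_right Rplus 0 (map a (seq 0 m)).

(* Average over the 2^n dyadic intervals of generation n:
   2^{-n} * sum_{j < 2^n} a j. *)
Definition davg (n : nat) (a : nat -> R) : R :=
  / (2 ^ n) * rsum (Nat.pow 2 n) a.

From Stdlib Require Import Reals List Lra Lia Psatz.
Open Scope R_scope.

(* Let [b := B_(9A/2)] and let [G] be its concavity gap between the root and the average of
   the leaves. For weights [k] with values in [[-1, 1]], reweight the leaves by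
   [1 +- (k - avg k) / 5]. By a Jensen inequality for [b] along the dyadic tree, each of the
   two reweighted averages of the leaf points lies in [D_(9A/2)] and has [b]-value at least
   the reweighted average of the leaf values; their midpoint is the root, so concavity at the
   root yields [G >= (4/25) |avg k (f - f_0)| |avg k (g - g_0)|]. Choosing [k] among
   [sgn (f - f_0)], [sgn (g - g_0)] and their mean gives the bound on the product of the two
   mean deviations. *)

Lemma fold_right_Rplus_init (l : list R) (c : R) :
  fold_right Rplus c l = fold_right Rplus 0 l + c.
Proof. induction l as [|x l IH]; simpl; [lra | rewrite IH; lra]. Qed.

Lemma rsum_S m a : rsum (S m) a = rsum m a + a m.
Proof.
  unfold rsum. rewrite seq_S, map_app, fold_right_app. simpl.
  rewrite fold_right_Rplus_init. lra.
Qed.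

Lemma rsum_ext m a b : (forall i, (i < m)%nat -> a i = b i) -> rsum m a = rsum m b.
Proof. induction m; intros H; [reflexivity|]. rewrite !rsum_S, IHm, H; auto. Qed.

Lemma rsum_le m a b : (forall i, (i < m)%nat -> a i <= b i) -> rsum m a <= rsum m b.
Proof.
  induction m as [|m IH]; intros H; [apply Rle_refl|]. rewrite !rsum_S.
  apply Rplus_le_compat; [apply IH | apply H]; auto.
Qed.

Lemma rsum_lin m x y p q :
  rsum m (fun i => x * p i + y * q i) = x * rsum m p + y * rsum m q.
Proof. induction m; [unfold rsum; simpl; ring|]. rewrite !rsum_S, IHm. ring. Qed.

Lemma rsum_const m c : rsum m (fun _ => c) = c * INR m.
Proof. induction m; [unfold rsum; simpl; ring|]. rewrite rsum_S, IHm, S_INR. ring. Qed.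

Lemma rsum_abs m a : Rabs (rsum m a) <= rsum m (fun i => Rabs (a i)).
Proof.
  induction m; [unfold rsum; simpl; rewrite Rabs_R0; lra|]. rewrite !rsum_S.
  eapply Rle_trans; [apply Rabs_triang | lra].
Qed.

Lemma rsum_add p q a : rsum (p + q) a = rsum p a + rsum q (fun i => a (p + i)%nat).
Proof.
  induction q; [rewrite Nat.add_0_r; unfold rsum at 3; simpl; ring|].
  rewrite Nat.add_succ_r, !rsum_S, IHq. ring.
Qed.

Lemma pow2_INR n : INR (Nat.pow 2 n) = 2 ^ n.
Proof. rewrite pow_INR. reflexivity. Qed.

Lemma davg_ext n a b : (forall l, a l = b l) -> davg n a = davg n b.
Proof. intros H. unfold davg. f_equal. apply rsum_ext. auto. Qed.

Lemma davg_lin n x y p q :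
  davg n (fun l => x * p l + y * q l) = x * davg n p + y * davg n q.
Proof. unfold davg. rewrite rsum_lin. ring. Qed.

Lemma davg_const n c : davg n (fun _ => c) = c.
Proof.
  unfold davg. rewrite rsum_const, pow2_INR. field. apply pow_nonzero. lra.
Qed.

Lemma davg_le n a b : (forall l, a l <= b l) -> davg n a <= davg n b.
Proof.
  intros H. unfold davg. apply Rmult_le_compat_l.
  - left. apply Rinv_0_lt_compat, pow_lt. lra.
  - apply rsum_le. auto.
Qed.

Lemma davg_abs n a : Rabs (davg n a) <= davg n (fun l => Rabs (a l)).
Proof.
  unfold davg. rewrite Rabs_mult, Rabs_right.
  - apply Rmult_le_compat_l; [|apply rsum_abs].
    left. apply Rinv_0_lt_compat, pow_lt. lra.
  - left. apply Rinv_0_lt_compat, pow_lt. lra.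
Qed.
Lemma davg_mean_mul n x y h :
  davg n (fun l => (/ 2 * x l + / 2 * y l) * h l)
  = (davg n (fun l => x l * h l) + davg n (fun l => y l * h l)) / 2.
Proof.
  rewrite (davg_ext _ _ (fun l => / 2 * (x l * h l) + / 2 * (y l * h l))) by (intros; ring).
  rewrite davg_lin. field.
Qed.

Lemma davg_range n k : (forall l, -1 <= k l <= 1) -> -1 <= davg n k <= 1.
Proof.
  intros Hk. split; [rewrite <- (davg_const n (-1)) | rewrite <- (davg_const n 1)]; apply davg_le, Hk.
Qed.

(* [block_sum a d j] sums [a] over the [2^d] leaves [j 2^d, ..., (j+1) 2^d - 1]:
   when [k + d = n], these are the generation-[n] descendants of node [(k, j)]. *)
Definition block_sum (a : nat -> R) (d j : nat) : R :=
  rsum (Nat.pow 2 d) (fun i => a (j * Nat.pow 2 d + i)%nat).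

Lemma davg_block_sum n a : davg n a = / 2 ^ n * block_sum a n 0.
Proof. reflexivity. Qed.

Lemma block_sum_O a j : block_sum a 0 j = a j.
Proof.
  unfold block_sum. simpl. rewrite rsum_S, Nat.mul_1_r, Nat.add_0_r.
  unfold rsum; simpl. ring.
Qed.

Lemma block_sum_S a d j : block_sum a (S d) j = block_sum a d (2 * j) + block_sum a d (2 * j + 1).
Proof.
  unfold block_sum. rewrite Nat.pow_succ_r'.
  replace (2 * Nat.pow 2 d)%nat with (Nat.pow 2 d + Nat.pow 2 d)%nat by lia.
  rewrite rsum_add. f_equal; apply rsum_ext; intros i _; f_equal; lia.
Qed.

Lemma block_sum_const c d j : block_sum (fun _ => c) d j = c * 2 ^ d.
Proof. unfold block_sum. rewrite rsum_const, pow2_INR. reflexivity. Qed.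

Lemma block_sum_scal c p d j : block_sum (fun l => c * p l) d j = c * block_sum p d j.
Proof.
  unfold block_sum.
  rewrite (rsum_ext _ _ (fun i => c * p (j * Nat.pow 2 d + i)%nat + 0 * 0)) by (intros; ring).
  rewrite rsum_lin. ring.
Qed.

Lemma block_sum_le_in a b d j :
  (forall i, (i < Nat.pow 2 d)%nat -> a (j * Nat.pow 2 d + i)%nat <= b (j * Nat.pow 2 d + i)%nat) ->
  block_sum a d j <= block_sum b d j.
Proof. apply rsum_le. Qed.

Lemma block_sum_le a b d j : (forall l, a l <= b l) -> block_sum a d j <= block_sum b d j.
Proof. intros H. apply block_sum_le_in. auto. Qed.

Lemma block_range j k i d n :
  (j < Nat.pow 2 k)%nat -> (i < Nat.pow 2 d)%nat -> (k + d = n)%nat ->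
  (j * Nat.pow 2 d + i < Nat.pow 2 n)%nat.
Proof. intros Hj Hi <-. rewrite Nat.pow_add_r. nia. Qed.

Definition mid_affine (c : Pt -> R) : Prop :=
  forall P P1 P2, is_mid P P1 P2 -> c P = (c P1 + c P2) / 2.

Ltac solve_mid_affine := intros ? ? ?; unfold is_mid; tauto.

Lemma node_block_sum (c : Pt -> R) (Hc : mid_affine c) (X : nat -> nat -> Pt) (n : nat)
  (HXmid : forall k j : nat, (k < n)%nat -> (j < Nat.pow 2 k)%nat ->
     is_mid (X k j) (X (S k) (2 * j)%nat) (X (S k) (2 * j + 1)%nat)) :
  forall d k j, (k + d = n)%nat -> (j < Nat.pow 2 k)%nat ->
    c (X k j) * 2 ^ d = block_sum (fun l => c (X n l)) d j.
Proof.
  induction d as [|d IH]; intros k j Hkd Hj.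
  - rewrite Nat.add_0_r in Hkd. subst k. rewrite block_sum_O. simpl. ring.
  - rewrite block_sum_S, <- (IH (S k) (2 * j)%nat), <- (IH (S k) (2 * j + 1)%nat) by (simpl; lia).
    rewrite (Hc _ _ _ (HXmid k j ltac:(lia) Hj)). simpl. field.
Qed.

Lemma root_davg (c : Pt -> R) (Hc : mid_affine c) (X : nat -> nat -> Pt) (n : nat)
  (HXmid : forall k j : nat, (k < n)%nat -> (j < Nat.pow 2 k)%nat ->
     is_mid (X k j) (X (S k) (2 * j)%nat) (X (S k) (2 * j + 1)%nat)) :
  c (X 0%nat 0%nat) = davg n (fun l => c (X n l)).
Proof.
  rewrite davg_block_sum, <- (node_block_sum c Hc X n HXmid n 0 0) by (simpl; lia).
  field. apply pow_nonzero. lra.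
Qed.

Definition pt_comb (t : R) (P Q : Pt) : Pt :=
  mkPt (t * pf P + (1 - t) * pf Q) (t * pg P + (1 - t) * pg Q) (t * pF P + (1 - t) * pF Q)
       (t * pG P + (1 - t) * pG Q) (t * pu P + (1 - t) * pu Q) (t * pv P + (1 - t) * pv Q).

Lemma Pt_ext (P Q : Pt) : pf P = pf Q -> pg P = pg Q -> pF P = pF Q -> pG P = pG Q ->
  pu P = pu Q -> pv P = pv Q -> P = Q.
Proof. destruct P, Q; simpl; intros; subst; reflexivity. Qed.

Lemma pt_comb_1 P Q : pt_comb 1 P Q = P.
Proof. apply Pt_ext; simpl; ring. Qed.

Lemma pt_comb_0 P Q : pt_comb 0 P Q = Q.
Proof. apply Pt_ext; simpl; ring. Qed.

Lemma pt_comb_mid s t P Q : is_mid (pt_comb ((s + t) / 2) P Q) (pt_comb s P Q) (pt_comb t P Q).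
Proof. unfold is_mid, pt_comb; simpl; repeat split; field. Qed.

Lemma convex_comb_pos t x y : 0 <= t <= 1 -> 0 < x -> 0 < y -> 0 < t * x + (1 - t) * y.
Proof. intros. destruct (Rle_dec x y); nra. Qed.

(* [f^2 <= F v] cuts out a convex set since [f^2 / v] is jointly convex on [v > 0]. *)
Lemma sq_le_mul_convex t f1 f2 F1 F2 v1 v2 : 0 <= t <= 1 -> 0 < v1 -> 0 < v2 ->
  f1 ^ 2 <= F1 * v1 -> f2 ^ 2 <= F2 * v2 ->
  (t * f1 + (1 - t) * f2) ^ 2 <= (t * F1 + (1 - t) * F2) * (t * v1 + (1 - t) * v2).
Proof.
  intros Ht Hv1 Hv2 Hf1 Hf2.
  assert (Hcross : 0 <= F1 * v2 + F2 * v1 - 2 * f1 * f2).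
  { assert (0 < v1 * v2) by nra.
    assert (0 <= v1 * v2 * (F1 * v2 + F2 * v1 - 2 * f1 * f2)).
    { assert (0 <= (f1 * v2 - f2 * v1) ^ 2) by apply pow2_ge_0.
      assert (0 <= (F1 * v1 - f1 ^ 2) * (v2 * v2)) by (apply Rmult_le_pos; nra).
      assert (0 <= (F2 * v2 - f2 ^ 2) * (v1 * v1)) by (apply Rmult_le_pos; nra).
      nra. }
    nra. }
  assert (0 <= t * (1 - t)) by nra.
  assert (0 <= t * t) by nra. assert (0 <= (1 - t) * (1 - t)) by nra.
  nra.
Qed.

Lemma prod_ge1_convex t u1 u2 v1 v2 : 0 <= t <= 1 -> 0 < u1 -> 0 < u2 -> 0 < v1 -> 0 < v2 ->
  1 <= u1 * v1 -> 1 <= u2 * v2 -> 1 <= (t * u1 + (1 - t) * u2) * (t * v1 + (1 - t) * v2).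
Proof.
  intros Ht Hu1 Hu2 Hv1 Hv2 H1 H2.
  assert (Hcross : 2 <= u1 * v2 + u2 * v1).
  { assert (1 <= (u1 * v2) * (u2 * v1)).
    { replace ((u1 * v2) * (u2 * v1)) with ((u1 * v1) * (u2 * v2)) by ring.
      replace 1 with (1 * 1) by ring. apply Rmult_le_compat; lra. }
    assert (0 < u1 * v2) by (apply Rmult_lt_0_compat; lra).
    assert (0 < u2 * v1) by (apply Rmult_lt_0_compat; lra).
    assert (0 <= (u1 * v2 - u2 * v1) ^ 2) by apply pow2_ge_0. nra. }
  assert (0 <= t * (1 - t)) by nra.
  assert (0 <= t * t) by nra. assert (0 <= (1 - t) * (1 - t)) by nra.
  nra.
Qed.

Lemma convex_comb_prod_le A t a1 a2 b1 b2 : 0 <= t <= 1 ->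
  0 <= a1 -> 0 <= a2 -> 0 <= b1 -> 0 <= b2 ->
  a1 * b1 <= A -> a2 * b2 <= A -> (a1 + a2) * (b1 + b2) <= 4 * A ->
  (t * a1 + (1 - t) * a2) * (t * b1 + (1 - t) * b2) <= 3 / 2 * A.
Proof.
  intros Ht ? ? ? ? H1 H2 H12.
  assert (0 <= t * (1 - t) <= 1 / 4) by (split; [nra|]; assert (0 <= (t - 1/2) ^ 2) by apply pow2_ge_0; nra).
  assert (0 <= t * t * (A - a1 * b1)) by (apply Rmult_le_pos; nra).
  assert (0 <= (1 - t) * (1 - t) * (A - a2 * b2)) by (apply Rmult_le_pos; nra).
  assert (0 <= t * (1 - t) * (4 * A - (a1 * b2 + a2 * b1))) by (apply Rmult_le_pos; nra).
  nra.
Qed.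

Lemma inD_mono A A' P : A <= A' -> inD A P -> inD A' P.
Proof. unfold inD; intros; intuition lra. Qed.

(* Endpoints whose [u], [v] exceed those of two sibling nodes of [D_A] by a factor at
   most [5/3] span a segment in [D_(9A/2)], since [(5/3)^2 * 3/2 <= 9/2]: this is where
   the constant [A' = 4.5 A] comes from. *)
Lemma inD_segment A (Q Q1 Q2 P1 P2 : Pt) :
  inD A Q -> inD A Q1 -> inD A Q2 -> is_mid Q Q1 Q2 ->
  inD (9 / 2 * A) P1 -> inD (9 / 2 * A) P2 ->
  pu P1 <= 5 / 3 * pu Q1 -> pu P2 <= 5 / 3 * pu Q2 ->
  pv P1 <= 5 / 3 * pv Q1 -> pv P2 <= 5 / 3 * pv Q2 ->
  forall t, 0 <= t <= 1 -> inD (9 / 2 * A) (pt_comb t P1 P2).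
Proof.
  intros HQ HQ1 HQ2 (_ & _ & _ & _ & Hu & Hv) HP1 HP2 Hu1 Hu2 Hv1 Hv2 t Ht.
  destruct HQ as (_ & _ & _ & HQA & _), HQ1 as (? & ? & _ & HQ1A & _), HQ2 as (? & ? & _ & HQ2A & _).
  destruct HP1 as (? & ? & ? & _ & ? & ?), HP2 as (? & ? & ? & _ & ? & ?).
  unfold inD; simpl.
  split; [apply convex_comb_pos; auto|].
  split; [apply convex_comb_pos; auto|].
  split; [apply prod_ge1_convex; auto|].
  split; [|split; apply sq_le_mul_convex; auto].
  assert (Hab : (t * pu Q1 + (1 - t) * pu Q2) * (t * pv Q1 + (1 - t) * pv Q2) <= 3 / 2 * A).
  { apply convex_comb_prod_le; try lra.
    replace ((pu Q1 + pu Q2) * (pv Q1 + pv Q2)) with (4 * (pu Q * pv Q)) by (rewrite Hu, Hv; field).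
    lra. }
  assert (t * pu P1 + (1 - t) * pu P2 <= 5 / 3 * (t * pu Q1 + (1 - t) * pu Q2)) by nra.
  assert (t * pv P1 + (1 - t) * pv P2 <= 5 / 3 * (t * pv Q1 + (1 - t) * pv Q2)) by nra.
  assert (0 < t * pu P1 + (1 - t) * pu P2) by (apply convex_comb_pos; auto).
  assert (0 < t * pv P1 + (1 - t) * pv P2) by (apply convex_comb_pos; auto).
  nra.
Qed.

Lemma ge_of_ge_sub_pow_half x y c : 0 <= c -> (forall N, x >= y - (/ 2) ^ N * c) -> x >= y.
Proof.
  intros Hc H. destruct (Rge_dec x y) as [|Hlt]; auto. exfalso.
  assert (He : 0 < (y - x) / (c + 1)) by (apply Rdiv_lt_0_compat; lra).
  destruct (pow_lt_1_zero (/ 2) ltac:(rewrite Rabs_right; lra) _ He) as [N HN].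
  specialize (HN N (le_n N)). specialize (H N).
  assert (Hp : 0 < (/ 2) ^ N) by (apply pow_lt; lra).
  rewrite Rabs_right in HN by lra.
  apply (Rmult_lt_compat_r (c + 1)) in HN; [|lra].
  unfold Rdiv in HN. rewrite Rmult_assoc, Rinv_l in HN by lra. nra.
Qed.

(* Nonnegativity replaces the continuity usually needed to pass from midpoint
   concavity to concavity: the dyadic approximation error is at most [2^-N (phi 0 + phi 1)]. *)
Lemma midpoint_concave_nonneg (phi : R -> R)
  (Hpos : forall t, 0 <= t <= 1 -> 0 <= phi t)
  (Hmid : forall s t, 0 <= s <= 1 -> 0 <= t <= 1 -> phi ((s + t) / 2) >= (phi s + phi t) / 2) :
  forall t, 0 <= t <= 1 -> phi t >= t * phi 1 + (1 - t) * phi 0.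
Proof.
  intros t Ht.
  assert (H0 := Hpos 0 ltac:(lra)). assert (H1 := Hpos 1 ltac:(lra)).
  apply (ge_of_ge_sub_pow_half _ _ (phi 0 + phi 1)); [lra|].
  intros N. revert t Ht. induction N as [|N IH]; intros t Ht.
  - assert (Ht0 := Hpos t Ht). simpl. nra.
  - simpl pow. destruct (Rle_dec t (1 / 2)).
    + assert (IHt := IH (2 * t) ltac:(lra)).
      assert (Hm := Hmid 0 (2 * t) ltac:(lra) ltac:(lra)).
      replace ((0 + 2 * t) / 2) with t in Hm by field. nra.
    + assert (IHt := IH (2 * t - 1) ltac:(lra)).
      assert (Hm := Hmid 1 (2 * t - 1) ltac:(lra) ltac:(lra)).
      replace ((1 + (2 * t - 1)) / 2) with t in Hm by field. nra.
Qed.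

Lemma concave_on_segment (A' : R) (b : Pt -> R)
  (b_nonneg : forall P, inD A' P -> 0 <= b P)
  (b_midconcave : forall P P1 P2, inD A' P -> inD A' P1 -> inD A' P2 -> is_mid P P1 P2 ->
     b P >= (b P1 + b P2) / 2)
  (P1 P2 : Pt) (Hseg : forall t, 0 <= t <= 1 -> inD A' (pt_comb t P1 P2)) :
  forall t, 0 <= t <= 1 -> b (pt_comb t P1 P2) >= t * b P1 + (1 - t) * b P2.
Proof.
  intros t Ht. rewrite <- (pt_comb_1 P1 P2) at 2. rewrite <- (pt_comb_0 P1 P2) at 3.
  apply (midpoint_concave_nonneg (fun s => b (pt_comb s P1 P2))); auto.
  intros s s' Hs Hs'. apply b_midconcave; try apply Hseg; try lra.
  apply pt_comb_mid.
Qed.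

Lemma ratio_in_unit x y : 0 < x -> 0 < y -> 0 <= x / (x + y) <= 1.
Proof.
  intros Hx Hy. split; [left; apply Rdiv_lt_0_compat; lra|].
  apply (Rmult_le_reg_r (x + y)); [lra|].
  unfold Rdiv. rewrite Rmult_assoc, Rinv_l by lra. lra.
Qed.

Lemma weighted_ratio_le (w p : nat -> R) m c d j : 0 < m -> (forall l, m <= w l <= c * m) ->
  (forall i, (i < Nat.pow 2 d)%nat -> 0 < p (j * Nat.pow 2 d + i)%nat) ->
  block_sum (fun l => w l * p l) d j / block_sum w d j <= c * (block_sum p d j / 2 ^ d).
Proof.
  intros Hm Hw Hp.
  assert (H2 : 0 < 2 ^ d) by (apply pow_lt; lra).
  assert (HW : m * 2 ^ d <= block_sum w d j)
    by (rewrite <- (block_sum_const m d j); apply block_sum_le; apply Hw).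
  assert (Hwp : block_sum (fun l => w l * p l) d j <= c * m * block_sum p d j).
  { rewrite <- block_sum_scal. apply block_sum_le_in. intros i Hi.
    specialize (Hp i Hi). specialize (Hw (j * Nat.pow 2 d + i)%nat). nra. }
  assert (Hp0 : 0 <= block_sum p d j).
  { rewrite <- (Rmult_0_l (2 ^ d)), <- (block_sum_const 0 d j). apply block_sum_le_in.
    intros i Hi. specialize (Hp i Hi). lra. }
  apply (Rmult_le_reg_r (block_sum w d j)); [nra|].
  unfold Rdiv. rewrite Rmult_assoc, Rinv_l, Rmult_1_r by nra.
  apply (Rle_trans _ _ _ Hwp).
  assert (Hc : 1 <= c) by (specialize (Hw 0%nat); nra).
  assert (0 <= c * (block_sum p d j * / 2 ^ d))
    by (apply Rmult_le_pos; [lra | apply Rmult_le_pos; [lra | left; apply Rinv_0_lt_compat; lra]]).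
  replace (c * m * block_sum p d j) with (c * (block_sum p d j * / 2 ^ d) * (m * 2 ^ d))
    by (field; lra).
  apply Rmult_le_compat_l; lra.
Qed.

Section WeightedJensen.

Variables (A : R) (b : Pt -> R).
Hypothesis HA : 1 < A.
Hypothesis b_nonneg : forall P, inD (9 / 2 * A) P -> 0 <= b P.
Hypothesis b_midconcave : forall P P1 P2,
  inD (9 / 2 * A) P -> inD (9 / 2 * A) P1 -> inD (9 / 2 * A) P2 -> is_mid P P1 P2 ->
  b P >= (b P1 + b P2) / 2.

Variables (X : nat -> nat -> Pt) (n : nat).
Hypothesis HXD : forall k j : nat, (k <= n)%nat -> (j < Nat.pow 2 k)%nat -> inD A (X k j).
Hypothesis HXmid : forall k j : nat, (k < n)%nat -> (j < Nat.pow 2 k)%nat ->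
  is_mid (X k j) (X (S k) (2 * j)%nat) (X (S k) (2 * j + 1)%nat).

Variables (w : nat -> R) (m : R).
Hypothesis m_pos : 0 < m.
Hypothesis w_range : forall l, m <= w l <= 5 / 3 * m.

Definition wavg (c : Pt -> R) (d j : nat) : R :=
  block_sum (fun l => w l * c (X n l)) d j / block_sum w d j.

Definition wavg_pt (d j : nat) : Pt :=
  mkPt (wavg pf d j) (wavg pg d j) (wavg pF d j) (wavg pG d j) (wavg pu d j) (wavg pv d j).

Lemma block_sum_w_pos d j : 0 < block_sum w d j.
Proof.
  assert (m * 2 ^ d <= block_sum w d j)
    by (rewrite <- (block_sum_const m d j); apply block_sum_le; apply w_range).
  assert (0 < 2 ^ d) by (apply pow_lt; lra). nra.
Qed.

Lemma wavg_pt_O j : wavg_pt 0 j = X n j.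
Proof.
  assert (0 < w j) by (specialize (w_range j); lra).
  apply Pt_ext; unfold wavg_pt, wavg; simpl; rewrite !block_sum_O; field; lra.
Qed.

Lemma wavg_pt_S d j :
  wavg_pt (S d) j =
  pt_comb (block_sum w d (2 * j) / (block_sum w d (2 * j) + block_sum w d (2 * j + 1)))
    (wavg_pt d (2 * j)) (wavg_pt d (2 * j + 1)).
Proof.
  assert (H1 := block_sum_w_pos d (2 * j)). assert (H2 := block_sum_w_pos d (2 * j + 1)).
  apply Pt_ext; unfold wavg_pt, wavg, pt_comb; cbn [pf pg pF pG pu pv];
    rewrite !block_sum_S; field; lra.
Qed.

Lemma wavg_le_node (c : Pt -> R) (Hc : mid_affine c) (Hpos : forall P, inD A P -> 0 < c P)
  d k j : (k + d = n)%nat -> (j < Nat.pow 2 k)%nat -> wavg c d j <= 5 / 3 * c (X k j).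
Proof.
  intros Hkd Hj.
  assert (0 < 2 ^ d) by (apply pow_lt; lra).
  replace (c (X k j)) with (block_sum (fun l => c (X n l)) d j / 2 ^ d)
    by (rewrite <- (node_block_sum c Hc X n HXmid d k j Hkd Hj); field; lra).
  apply (weighted_ratio_le _ _ m); auto.
  intros i Hi. apply Hpos, HXD; [lia | apply (block_range j k i d n); auto].
Qed.

Lemma wavg_segment_inD d k j : (S k + d = n)%nat -> (j < Nat.pow 2 k)%nat ->
  inD (9 / 2 * A) (wavg_pt d (2 * j)) -> inD (9 / 2 * A) (wavg_pt d (2 * j + 1)) ->
  forall t, 0 <= t <= 1 -> inD (9 / 2 * A) (pt_comb t (wavg_pt d (2 * j)) (wavg_pt d (2 * j + 1))).
Proof.
  intros Hkd Hj H1 H2.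
  assert (Hj1 : (2 * j < Nat.pow 2 (S k))%nat) by (simpl; lia).
  assert (Hj2 : (2 * j + 1 < Nat.pow 2 (S k))%nat) by (simpl; lia).
  assert (Hu : mid_affine pu) by solve_mid_affine.
  assert (Hv : mid_affine pv) by solve_mid_affine.
  assert (Hupos : forall P, inD A P -> 0 < pu P) by (intros P HP; apply HP).
  assert (Hvpos : forall P, inD A P -> 0 < pv P) by (intros P HP; apply HP).
  apply (inD_segment A (X k j) (X (S k) (2 * j)%nat) (X (S k) (2 * j + 1)%nat)); auto.
  - apply HXD; lia.
  - apply HXD; lia.
  - apply HXD; lia.
  - apply HXmid; auto; lia.
  - apply (wavg_le_node pu Hu Hupos d (S k)); auto.
  - apply (wavg_le_node pu Hu Hupos d (S k)); auto.
  - apply (wavg_le_node pv Hv Hvpos d (S k)); auto.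
  - apply (wavg_le_node pv Hv Hvpos d (S k)); auto.
Qed.

Lemma wavg_pt_inD : forall d k j, (k + d = n)%nat -> (j < Nat.pow 2 k)%nat ->
  inD (9 / 2 * A) (wavg_pt d j).
Proof.
  induction d as [|d IH]; intros k j Hkd Hj.
  - rewrite Nat.add_0_r in Hkd. subst k.
    rewrite wavg_pt_O. apply (inD_mono A); [lra|]. apply HXD; auto.
  - assert (H1 := block_sum_w_pos d (2 * j)). assert (H2 := block_sum_w_pos d (2 * j + 1)).
    rewrite wavg_pt_S. apply (wavg_segment_inD d k j); try lia; auto.
    + apply (IH (S k)); simpl; lia.
    + apply (IH (S k)); simpl; lia.
    + apply ratio_in_unit; auto.
Qed.

Lemma wavg_pt_jensen : forall d k j, (k + d = n)%nat -> (j < Nat.pow 2 k)%nat ->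
  block_sum w d j * b (wavg_pt d j) >= block_sum (fun l => w l * b (X n l)) d j.
Proof.
  induction d as [|d IH]; intros k j Hkd Hj.
  - rewrite wavg_pt_O, !block_sum_O. lra.
  - assert (Hkd' : (S k + d = n)%nat) by lia.
    assert (Hj1 : (2 * j < Nat.pow 2 (S k))%nat) by (simpl; lia).
    assert (Hj2 : (2 * j + 1 < Nat.pow 2 (S k))%nat) by (simpl; lia).
    assert (IH1 := IH _ _ Hkd' Hj1). assert (IH2 := IH _ _ Hkd' Hj2).
    assert (HD1 := wavg_pt_inD _ _ _ Hkd' Hj1). assert (HD2 := wavg_pt_inD _ _ _ Hkd' Hj2).
    set (W1 := block_sum w d (2 * j)) in *. set (W2 := block_sum w d (2 * j + 1)) in *.
    assert (HW1 : 0 < W1) by apply block_sum_w_pos.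
    assert (HW2 : 0 < W2) by apply block_sum_w_pos.
    assert (Hbeta := ratio_in_unit _ _ HW1 HW2).
    assert (Hcc := concave_on_segment _ b b_nonneg b_midconcave _ _
      (wavg_segment_inD d k j Hkd' Hj HD1 HD2) _ Hbeta).
    rewrite wavg_pt_S, !block_sum_S. fold W1 W2.
    assert (Hsplit : (W1 + W2) * (W1 / (W1 + W2) * b (wavg_pt d (2 * j))
              + (1 - W1 / (W1 + W2)) * b (wavg_pt d (2 * j + 1)))
            = W1 * b (wavg_pt d (2 * j)) + W2 * b (wavg_pt d (2 * j + 1))) by (field; lra).
    apply Rle_ge. apply Rge_le in Hcc.
    apply (Rmult_le_compat_l (W1 + W2)) in Hcc; lra.
Qed.

Lemma wavg_root (c : Pt -> R) : davg n w = 1 -> wavg c n 0 = davg n (fun l => w l * c (X n l)).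
Proof.
  rewrite !davg_block_sum. intros Hw. unfold wavg.
  assert (Hs : block_sum w n 0 = 2 ^ n).
  { rewrite <- (Rmult_1_r (2 ^ n)), <- Hw. field. apply pow_nonzero; lra. }
  rewrite Hs. unfold Rdiv. apply Rmult_comm.
Qed.

Lemma wavg_root_jensen : davg n w = 1 ->
  inD (9 / 2 * A) (wavg_pt n 0) /\ b (wavg_pt n 0) >= davg n (fun l => w l * b (X n l)).
Proof.
  intros Hw. split; [apply (wavg_pt_inD n 0); simpl; lia|].
  assert (J := wavg_pt_jensen n 0 0 eq_refl ltac:(simpl; lia)).
  rewrite davg_block_sum in *.
  assert (H2n : 0 < 2 ^ n) by (apply pow_lt; lra).
  assert (Hs : block_sum w n 0 = 2 ^ n).
  { rewrite <- (Rmult_1_r (2 ^ n)), <- Hw. field. lra. }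
  rewrite Hs in J.
  apply Rle_ge, (Rmult_le_reg_l (2 ^ n)); [lra|].
  rewrite <- Rmult_assoc, Rinv_r, Rmult_1_l by lra. lra.
Qed.

End WeightedJensen.

Definition tilt (n : nat) (s : R) (k : nat -> R) : nat -> R :=
  fun l => 1 + s * (k l - davg n k) / 5.

Lemma davg_tilt n s k : davg n (tilt n s k) = 1.
Proof.
  unfold tilt. rewrite (davg_ext _ _ (fun l => (1 - s * davg n k / 5) * 1 + (s / 5) * k l))
    by (intros; field).
  rewrite davg_lin, davg_const. field.
Qed.

Lemma tilt_range n s k : (s = 1 \/ s = -1) -> (forall l, -1 <= k l <= 1) ->
  forall l, (4 - s * davg n k) / 5 <= tilt n s k l <= 5 / 3 * ((4 - s * davg n k) / 5).
Proof.
  intros Hs Hk l. unfold tilt. assert (He := davg_range n k Hk).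
  specialize (Hk l). destruct Hs as [-> | ->]; lra.
Qed.

Lemma davg_tilt_pair n k a :
  (davg n (fun l => tilt n 1 k l * a l) + davg n (fun l => tilt n (-1) k l * a l)) / 2 = davg n a.
Proof.
  transitivity (davg n (fun l => / 2 * (tilt n 1 k l * a l) + / 2 * (tilt n (-1) k l * a l))).
  - rewrite davg_lin. field.
  - apply davg_ext. intros l. unfold tilt. field.
Qed.

Lemma davg_tilt_diff n k a :
  davg n (fun l => tilt n 1 k l * a l) - davg n (fun l => tilt n (-1) k l * a l)
  = 2 / 5 * davg n (fun l => k l * (a l - davg n a)).
Proof.
  transitivity (davg n (fun l => 2 / 5 * (k l * a l) + - (2 / 5 * davg n k) * a l)).
  - transitivity (davg n (fun l => 1 * (tilt n 1 k l * a l) + -1 * (tilt n (-1) k l * a l))).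
    + rewrite davg_lin. ring.
    + apply davg_ext. intros l. unfold tilt. field.
  - rewrite (davg_ext _ (fun l => k l * (a l - davg n a)) (fun l => 1 * (k l * a l) + - davg n a * k l))
      by (intros; ring).
    rewrite !davg_lin. ring.
Qed.

Lemma gap_ge_weighted_deviations (b : Pt -> R) (A : R) (HA : 1 < A)
  (b_nonneg : forall P, inD (9 / 2 * A) P -> 0 <= b P)
  (b_concave : forall P P1 P2,
     inD (9 / 2 * A) P -> inD (9 / 2 * A) P1 -> inD (9 / 2 * A) P2 -> is_mid P P1 P2 ->
     b P >= (b P1 + b P2) / 2 + Rabs (pf P1 - pf P2) * Rabs (pg P1 - pg P2))
  (X : nat -> nat -> Pt) (n : nat)
  (HXD : forall k j : nat, (k <= n)%nat -> (j < Nat.pow 2 k)%nat -> inD A (X k j))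
  (HXmid : forall k j : nat, (k < n)%nat -> (j < Nat.pow 2 k)%nat ->
     is_mid (X k j) (X (S k) (2 * j)%nat) (X (S k) (2 * j + 1)%nat))
  (k : nat -> R) (Hk : forall l, -1 <= k l <= 1) :
  b (X 0%nat 0%nat) - davg n (fun l => b (X n l)) >=
  4 / 25 * (Rabs (davg n (fun l => k l * (pf (X n l) - pf (X 0%nat 0%nat)))) *
            Rabs (davg n (fun l => k l * (pg (X n l) - pg (X 0%nat 0%nat))))).
Proof.
  assert (b_midconcave : forall P P1 P2,
     inD (9 / 2 * A) P -> inD (9 / 2 * A) P1 -> inD (9 / 2 * A) P2 -> is_mid P P1 P2 ->
     b P >= (b P1 + b P2) / 2).
  { intros P P1 P2 H H1 H2 Hm. assert (Hg := b_concave P P1 P2 H H1 H2 Hm).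
    assert (0 <= Rabs (pf P1 - pf P2) * Rabs (pg P1 - pg P2))
      by (apply Rmult_le_pos; apply Rabs_pos). lra. }
  assert (He := davg_range n k Hk).
  destruct (wavg_root_jensen A b HA b_nonneg b_midconcave X n HXD HXmid (tilt n 1 k) ((4 - 1 * davg n k) / 5))
    as [HDp HBp]; [lra | apply tilt_range; auto | apply davg_tilt |].
  destruct (wavg_root_jensen A b HA b_nonneg b_midconcave X n HXD HXmid (tilt n (-1) k) ((4 - -1 * davg n k) / 5))
    as [HDm HBm]; [lra | apply tilt_range; auto | apply davg_tilt |].
  set (Yp := wavg_pt X n (tilt n 1 k) n 0) in *. set (Ym := wavg_pt X n (tilt n (-1) k) n 0) in *.
  assert (Hroot : forall c, mid_affine c -> c (X 0%nat 0%nat) = (wavg X n (tilt n 1 k) c n 0 + wavg X n (tilt n (-1) k) c n 0) / 2).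
  { intros c Hc. rewrite !wavg_root by apply davg_tilt. rewrite davg_tilt_pair. apply root_davg; auto. }
  assert (Hspread : forall c, mid_affine c -> wavg X n (tilt n 1 k) c n 0 - wavg X n (tilt n (-1) k) c n 0
                      = 2 / 5 * davg n (fun l => k l * (c (X n l) - c (X 0%nat 0%nat)))).
  { intros c Hc. rewrite !wavg_root, davg_tilt_diff by apply davg_tilt. rewrite (root_davg c Hc X n HXmid). reflexivity. }
  assert (Hmid : is_mid (X 0%nat 0%nat) Yp Ym).
  { unfold is_mid, Yp, Ym, wavg_pt. cbn [pf pg pF pG pu pv].
    repeat split; apply Hroot. all: solve_mid_affine. }
  assert (HD0 : inD (9 / 2 * A) (X 0%nat 0%nat)).
  { apply (inD_mono A); [lra|]. apply HXD; simpl; lia. }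
  assert (Hgain := b_concave _ _ _ HD0 HDp HDm Hmid).
  assert (Hf : pf Yp - pf Ym = 2 / 5 * davg n (fun l => k l * (pf (X n l) - pf (X 0%nat 0%nat))))
    by (apply Hspread; solve_mid_affine).
  assert (Hg : pg Yp - pg Ym = 2 / 5 * davg n (fun l => k l * (pg (X n l) - pg (X 0%nat 0%nat))))
    by (apply Hspread; solve_mid_affine).
  rewrite Hf, Hg, !Rabs_mult, (Rabs_right (2 / 5)) in Hgain by lra.
  assert (Hb := davg_tilt_pair n k (fun l => b (X n l))).
  lra.
Qed.

Definition sgn (x : R) : R := if Rle_dec 0 x then 1 else -1.

Lemma sgn_bound x : -1 <= sgn x <= 1.
Proof. unfold sgn. destruct (Rle_dec 0 x); lra. Qed.

Lemma sgn_mul_self x : sgn x * x = Rabs x.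
Proof. unfold sgn. destruct (Rle_dec 0 x); [rewrite Rabs_right | rewrite Rabs_left]; lra. Qed.

Lemma Rabs_sgn_mul x y : Rabs (sgn x * y) = Rabs y.
Proof.
  unfold sgn. destruct (Rle_dec 0 x); [rewrite Rmult_1_l; reflexivity|].
  rewrite <- Rabs_Ropp. f_equal. ring.
Qed.

Lemma davg_abs_nonneg n h : 0 <= davg n (fun l => Rabs (h l)).
Proof. rewrite <- (davg_const n 0). apply davg_le. intros; apply Rabs_pos. Qed.

Lemma davg_sgn_mul_self n h : davg n (fun l => sgn (h l) * h l) = davg n (fun l => Rabs (h l)).
Proof. apply davg_ext. intros; apply sgn_mul_self. Qed.

Lemma Rabs_davg_sgn_mul_le n x h :
  Rabs (davg n (fun l => sgn (x l) * h l)) <= davg n (fun l => Rabs (h l)).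
Proof.
  eapply Rle_trans; [apply davg_abs | right; apply davg_ext; intros; apply Rabs_sgn_mul].
Qed.

(* The three hypotheses come from the tests [k = sgn f], [k = sgn g] and their mean. Either
   [|q| >= c/4] or [|p| >= a/4], or else the mean test sees at least [3/8] of both [a] and [c]. *)
Lemma product_le_of_sign_tests a c p q G : 0 <= a -> 0 <= c -> Rabs p <= a -> Rabs q <= c ->
  G >= 4 / 25 * (a * Rabs q) -> G >= 4 / 25 * (Rabs p * c) ->
  G >= 4 / 25 * (Rabs ((a + p) / 2) * Rabs ((q + c) / 2)) ->
  a * c <= 72 * G.
Proof.
  intros Ha Hc Hp Hq Hs Ht Hst.
  assert (0 <= a * Rabs q) by (apply Rmult_le_pos; [lra | apply Rabs_pos]).
  destruct (Rle_dec (c / 4) (Rabs q)).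
  { assert (a * (c / 4) <= a * Rabs q) by (apply Rmult_le_compat_l; lra). lra. }
  destruct (Rle_dec (a / 4) (Rabs p)).
  { assert (a / 4 * c <= Rabs p * c) by (apply Rmult_le_compat_r; lra). lra. }
  assert (- (a / 4) < p) by (pose proof (Rle_abs (- p)); rewrite Rabs_Ropp in *; lra).
  assert (- (c / 4) < q) by (pose proof (Rle_abs (- q)); rewrite Rabs_Ropp in *; lra).
  rewrite (Rabs_right ((a + p) / 2)), (Rabs_right ((q + c) / 2)) in Hst by lra.
  assert (3 * a / 8 * (3 * c / 8) <= (a + p) / 2 * ((q + c) / 2)) by (apply Rmult_le_compat; lra).
  lra.
Qed.

Theorem lemma6p1 (C : R) (HC : 0 < C) (B : R -> Pt -> R)
  (Hbound : forall A : R, 1 < A -> forall X : Pt, inD A X ->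
     0 <= B A X /\ B A X <= C * A * sqrt (pF X) * sqrt (pG X))
  (Hconc : forall A : R, 1 < A -> forall X X1 X2 : Pt,
     inD A X -> inD A X1 -> inD A X2 -> is_mid X X1 X2 ->
     B A X >= (B A X1 + B A X2) / 2 + Rabs (pf X1 - pf X2) * Rabs (pg X1 - pg X2))
  (A : R) (HA : 1 < A) (n : nat) (Hn : (1 <= n)%nat)
  (X : nat -> nat -> Pt)
  (HXD : forall k j : nat, (k <= n)%nat -> (j < Nat.pow 2 k)%nat -> inD A (X k j))
  (HXmid : forall k j : nat, (k < n)%nat -> (j < Nat.pow 2 k)%nat ->
     is_mid (X k j) (X (S k) (2 * j)%nat) (X (S k) (2 * j + 1)%nat)) :
  davg n (fun j => Rabs (pf (X n j) - pf (X 0%nat 0%nat))) *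
  davg n (fun j => Rabs (pg (X n j) - pg (X 0%nat 0%nat)))
  <= 72 * (B (9 / 2 * A) (X 0%nat 0%nat) - davg n (fun j => B (9 / 2 * A) (X n j))).
Proof.
  assert (HA' : 1 < 9 / 2 * A) by lra.
  set (df := fun l => pf (X n l) - pf (X 0%nat 0%nat)).
  set (dg := fun l => pg (X n l) - pg (X 0%nat 0%nat)).
  set (G := B (9 / 2 * A) (X 0%nat 0%nat) - davg n (fun j => B (9 / 2 * A) (X n j))).
  assert (Hgap : forall k : nat -> R, (forall l, -1 <= k l <= 1) ->
    G >= 4 / 25 * (Rabs (davg n (fun l => k l * df l)) * Rabs (davg n (fun l => k l * dg l))))
    by exact (gap_ge_weighted_deviations (B (9 / 2 * A)) A HA
                (fun P HP => proj1 (Hbound _ HA' P HP)) (Hconc _ HA') X n HXD HXmid).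
  change (davg n (fun l => Rabs (df l)) * davg n (fun l => Rabs (dg l)) <= 72 * G).
  set (a := davg n (fun l => Rabs (df l))). set (c := davg n (fun l => Rabs (dg l))).
  assert (Ha : 0 <= a) by apply davg_abs_nonneg.
  assert (Hc : 0 <= c) by apply davg_abs_nonneg.
  apply (product_le_of_sign_tests a c (davg n (fun l => sgn (dg l) * df l))
           (davg n (fun l => sgn (df l) * dg l)) G Ha Hc);
    try apply Rabs_davg_sgn_mul_le.
  - assert (H := Hgap (fun l => sgn (df l)) (fun l => sgn_bound (df l))).
    cbv beta in H. rewrite davg_sgn_mul_self in H. fold a in H. rewrite (Rabs_right a) in H by lra. exact H.
  - assert (H := Hgap (fun l => sgn (dg l)) (fun l => sgn_bound (dg l))).
    cbv beta in H. rewrite davg_sgn_mul_self in H. fold c in H. rewrite (Rabs_right c) in H by lra. exact H.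
  - assert (H := Hgap (fun l => / 2 * sgn (df l) + / 2 * sgn (dg l))).
    cbv beta in H. rewrite !davg_mean_mul, !davg_sgn_mul_self in H. apply H.
    intros l. pose proof (sgn_bound (df l)). pose proof (sgn_bound (dg l)). lra.
Qed.
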